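(* Let $\mathscr{A}$ be a quiver over a nonempty set of vertices $\Lambda$ and let $\sigma\colon \mathscr{A}\otimes\mathscr{A}\to\mathscr{A}\otimes\mathscr{A}$, $\sigma(x,y)=(x\rightharpoonup y,\,x\leftharpoonup y)$, be an involutive left-non-degenerate quiver-theoretic Yang--Baxter map. For $x,y\in\mathscr{A}$ with $\mathfrak{s}(x)=\mathfrak{s}(y)$ put $x\star y:=(x\rightharpoonup\cdot)^{-1}(y)$. Let $j\colon\mathscr{A}\to\mathscr{C}(\sigma)$ send $s\in\mathscr{A}$ to the class of the length-one path $s$. Then $j$ is injective, and the structure category $\mathscr{C}(\sigma)$: (i) satisfies a quadratic isoperimetric inequality with respect to the presentation $\mathscr{C}(\sigma)=\langle \mathscr{A}\mid x|(x\star y)\sim y|(y\star x)\text{ for all }x\neq y\in\mathscr{A}\text{ with }\mathfrak{s}(x)=\mathfrak{s}(y)\rangle^+$; (ii) has no nontrivial invertible elements; (iii) is left-cancellative; (iv) admits unique conditional right-lcms, and the complementation is given by $\star$, i.e. for distinct $x,y\in\mathscr{A}$ with the same source, $j(x)j(x\star y)=j(y)j(y\star x)$ is the right-lcm of $j(x)$ and $j(y)$; (v) is Noetherian; (vi) has as atoms exactly the elements of $j(\mathscr{A})$; (vii) has a Garside family $E$ given by the closure of $j(\mathscr{A})$ under right-lcms, and $E$ is the smallest Garside family of $\mathscr{C}(\sigma)$ containing $j(\mathscr{A})$ and all identity elements.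
   Context: A quiver over $\Lambda$ is a set $\mathscr{A}$ of arrows with source and target maps $\mathfrak{s},\mathfrak{t}\colon\mathscr{A}\to\Lambda$; $\mathscr{A}(\lambda,\Lambda)$ denotes the arrows with source $\lambda$ and $\mathscr{A}(\Lambda,\mu)$ those with target $\mu$. $\mathscr{A}\otimes\mathscr{A}$ is the quiver of composable pairs $(x,y)$ (written $x|y$), $\mathfrak{t}(x)=\mathfrak{s}(y)$, with source $\mathfrak{s}(x)$ and target $\mathfrak{t}(y)$; a morphism of quivers over $\Lambda$ preserves sources and targets. A (quiver-theoretic) Yang--Baxter map is a morphism $\sigma\colon\mathscr{A}\otimes\mathscr{A}\to\mathscr{A}\otimes\mathscr{A}$ of quivers over $\Lambda$ with $(\sigma\otimes\mathrm{id})(\mathrm{id}\otimes\sigma)(\sigma\otimes\mathrm{id})=(\mathrm{id}\otimes\sigma)(\sigma\otimes\mathrm{id})(\mathrm{id}\otimes\sigma)$ on composable triples. It is involutive if $\sigma^2=\mathrm{id}$, and left-non-degenerate if for every $x$ the map $x\rightharpoonup\cdot\colon\mathscr{A}(\mathfrak{t}(x),\Lambda)\to\mathscr{A}(\mathfrak{s}(x),\Lambda)$ is bijective. The structure category $\mathscr{C}(\sigma)$ is the category presented by generators $\mathscr{A}$ and relations $x|y\sim(x\rightharpoonup y)|(x\leftharpoonup y)$ for all composable $x|y$, i.e. the path category of $\mathscr{A}$ modulo the congruence generated by these relations (composition written left to right). In a category, $x$ left-divides $y$ if $y=xz$; a right-lcm of $x,y$ is a common right-multiple $xu=yv$ left-dividing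 every common right-multiple; conditional right-lcms means any two elements with a common right-multiple have a right-lcm. An atom is an element which in every factorization has exactly one non-invertible factor. Noetherian: the proper factor relation ($x\subset y$ iff $y=y'xy''$ with $y'$ or $y''$ non-invertible) is well-founded. A presentation satisfies a quadratic isoperimetric inequality if there is a constant $C$ such that any two paths of lengths $r,s$ representing the same element are connected by at most $C(r+s)^2$ elementary steps each replacing a subpath by the other side of a relation. For a left-cancellative category $\mathscr{C}$ and a subfamily $\mathscr{S}$, let $\mathscr{S}^\sharp=\mathscr{S}\mathscr{C}^\times\cup\mathscr{C}^\times$ ($\mathscr{C}^\times$ the invertible elements); a path $x|y$ is $\mathscr{S}$-greedy if for all $s\in\mathscr{S}$ and $c$ with $\mathfrak{t}(c)=\mathfrak{s}(x)$, $s$ left-divides $cxy$ implies $s$ left-divides $cx$; a path $x_1|\dots|x_r$ is $\mathscr{S}$-normal if all $x_i|x_{i+1}$ are $\mathscr{S}$-greedy and all $x_i\in\mathscr{S}^\sharp$; $\mathscr{S}$ is a Garside family if every element of $\mathscr{C}$ is a product $x_1\cdots x_r$ with $x_1|\dots|x_r$ $\mathscr{S}$-normal. *)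

From Stdlib Require Import Relations.
From Stdlib Require List.
From mathcomp Require Import all_boot.

Set Implicit Arguments.
Unset Strict Implicit.
Unset Printing Implicit Defensive.

(* A quiver over the vertex set [vert] with arrows [arr], source/target maps,
   together with a map sigma(x,y) = (lft x y, rgt x y) on composable pairs
   (lft x y = x ⇀ y, rgt x y = x ↼ y).  Values of lft/rgt on non-composable
   pairs are irrelevant: every hypothesis and conclusion only uses them on
   composable pairs. *)
Record qsys := QSys {
  vert : Type;
  arr : Type;
  src : arr -> vert;
  tgt : arr -> vert;
  lft : arr -> arr -> arr;
  rgt : arr -> arr -> arr
}.

Section Defs.
Variable X : qsys.
Local Notation V := (vert X).
Local Notation A := (arr X).
Local Notation src := (@src X).
Local Notation tgt := (@tgt X).
Local Notation lft := (@lft X).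
Local Notation rgt := (@rgt X).

Definition sigma_quiver_morphism : Prop :=
  forall x y, tgt x = src y ->
    [/\ src (lft x y) = src x, tgt (lft x y) = src (rgt x y)
      & tgt (rgt x y) = tgt y].

Definition s1 (t : A * A * A) : A * A * A :=
  let: (a, b, c) := t in (lft a b, rgt a b, c).
Definition s2 (t : A * A * A) : A * A * A :=
  let: (a, b, c) := t in (a, lft b c, rgt b c).

Definition braid_relation : Prop :=
  forall x y z, tgt x = src y -> tgt y = src z ->
    s1 (s2 (s1 (x, y, z))) = s2 (s1 (s2 (x, y, z))).

Definition yang_baxter_map : Prop :=
  sigma_quiver_morphism /\ braid_relation.

Definition yb_involutive : Prop :=
  forall x y, tgt x = src y ->
    lft (lft x y) (rgt x y) = x /\ rgt (lft x y) (rgt x y) = y.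

Definition left_nondegenerate : Prop :=
  forall x,
    (forall y1 y2, src y1 = tgt x -> src y2 = tgt x ->
       lft x y1 = lft x y2 -> y1 = y2) /\
    (forall z, src z = src x -> exists y, src y = tgt x /\ lft x y = z).

Definition star_spec (star : A -> A -> A) : Prop :=
  forall x y, src x = src y -> src (star x y) = tgt x /\ lft x (star x y) = y.

Definition qpath := (V * seq A)%type.

Fixpoint valid_from (v : V) (s : seq A) : Prop :=
  match s with
  | [::] => True
  | x :: s' => src x = v /\ valid_from (tgt x) s'
  end.

Fixpoint end_from (v : V) (s : seq A) : V :=
  match s with
  | [::] => v
  | x :: s' => end_from (tgt x) s'
  end.

Definition pvalid (p : qpath) : Prop := valid_from p.1 p.2.
Definition psrc (p : qpath) : V := p.1.
Definition ptgt (p : qpath) : V := end_from p.1 p.2.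
Definition plen (p : qpath) : nat := size p.2.
Definition pcat (p q : qpath) : qpath := (p.1, p.2 ++ q.2).
Definition idp (v : V) : qpath := (v, [::]).
Definition jmap (s : A) : qpath := (src s, [:: s]).

Definition rstep (p q : qpath) : Prop :=
  pvalid p /\ exists a b x y, tgt x = src y /\ p.2 = a ++ x :: y :: b /\
    q = (p.1, a ++ lft x y :: rgt x y :: b).

(* equality in the structure category C(sigma): congruence generated by the
   relations, on valid paths *)
Definition ceq (p q : qpath) : Prop :=
  pvalid p /\ clos_refl_sym_trans qpath rstep p q.

Definition ldiv (a b : qpath) : Prop :=
  exists z, ptgt a = psrc z /\ ceq (pcat a z) b.

Definition invertible (p : qpath) : Prop :=
  pvalid p /\ exists q, ptgt p = psrc q /\ ptgt q = psrc p /\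
    ceq (pcat p q) (idp (psrc p)) /\ ceq (pcat q p) (idp (ptgt p)).

Definition is_rlcm (c a b : qpath) : Prop :=
  [/\ ldiv a c, ldiv b c & forall d, ldiv a d -> ldiv b d -> ldiv c d].

Definition conditional_rlcms : Prop :=
  forall a b d, ldiv a d -> ldiv b d -> exists c, is_rlcm c a b.

Definition unique_rlcms : Prop :=
  forall a b c c', is_rlcm c a b -> is_rlcm c' a b -> ceq c c'.

Definition left_cancellative : Prop :=
  forall a b c, ptgt a = psrc b -> ptgt a = psrc c ->
    ceq (pcat a b) (pcat a c) -> ceq b c.

Definition proper_factor (x y : qpath) : Prop :=
  pvalid x /\ exists y' y'', pvalid y' /\ pvalid y'' /\
    ptgt y' = psrc x /\ ptgt x = psrc y'' /\
    ceq (pcat (pcat y' x) y'') y /\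
    (~ invertible y' \/ ~ invertible y'').

Definition noetherian : Prop := well_founded proper_factor.

Fixpoint chained (fs : seq qpath) : Prop :=
  match fs with
  | f :: ((g :: _) as fs') => ptgt f = psrc g /\ chained fs'
  | _ => True
  end.

Fixpoint adj_all (R : qpath -> qpath -> Prop) (fs : seq qpath) : Prop :=
  match fs with
  | f :: ((g :: _) as fs') => R f g /\ adj_all R fs'
  | _ => True
  end.

Definition product_is (fs : seq qpath) (p : qpath) : Prop :=
  exists f fs', fs = f :: fs' /\ ceq (f.1, flatten (map snd fs)) p.

Definition factorization (p : qpath) (fs : seq qpath) : Prop :=
  List.Forall pvalid fs /\ chained fs /\ product_is fs p.

Definition is_atom (p : qpath) : Prop :=
  pvalid p /\ forall fs, factorization p fs ->
    exists i, (exists f, List.nth_error fs i = Some f /\ ~ invertible f) /\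
      forall j g, j <> i -> List.nth_error fs j = Some g -> invertible g.

Definition qfamily := qpath -> Prop.

Definition family_of_elements (S : qfamily) : Prop :=
  forall p q, ceq p q -> S p -> S q.

Definition Ssharp (S : qfamily) (p : qpath) : Prop :=
  invertible p \/
  exists s e, S s /\ invertible e /\ ptgt s = psrc e /\ ceq (pcat s e) p.

Definition greedy (S : qfamily) (x y : qpath) : Prop :=
  forall s c, S s -> pvalid c -> ptgt c = psrc x ->
    ldiv s (pcat (pcat c x) y) -> ldiv s (pcat c x).

Definition s_normal (S : qfamily) (fs : seq qpath) : Prop :=
  List.Forall pvalid fs /\ chained fs /\ List.Forall (Ssharp S) fs /\
  adj_all (greedy S) fs.

Definition garside (S : qfamily) : Prop :=
  forall p, pvalid p -> exists fs, fs <> [::] /\ s_normal S fs /\ product_is fs p.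

Inductive Ecl : qpath -> Prop :=
| Ecl_gen s p : ceq p (jmap s) -> Ecl p
| Ecl_id v p : ceq p (idp v) -> Ecl p
| Ecl_lcm a b c : Ecl a -> Ecl b -> is_rlcm c a b -> Ecl c.

Section Pres.
Variable star : A -> A -> A.

Definition step2 (p q : qpath) : Prop :=
  pvalid p /\ exists a b x y, x <> y /\ src x = src y /\
    p.2 = a ++ x :: star x y :: b /\ q = (p.1, a ++ y :: star y x :: b).

End Pres.

Inductive nsteps (R : qpath -> qpath -> Prop) : nat -> qpath -> qpath -> Prop :=
| nsteps0 p : nsteps R 0 p p
| nstepsS n p r q : (R p r \/ R r p) -> nsteps R n r q -> nsteps R n.+1 p q.

End Defs.

(* Label a path x_1|...|x_n from v by y_i := (x_1 ... x_(i-1)) ⇀ x_i.  All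
   labels start at v, and by left non-degeneracy the labelling is a bijection
   between paths from v and words over A(v, Λ).  Involutivity and the braid
   relation show that a defining relation x|y ~ (x⇀y)|(x↼y) transposes two
   adjacent labels, and every adjacent transposition arises this way.  Hence
   two paths are equal in C(σ) iff they have the same source and the same
   multiset of labels: C(σ)(v, -) is the free commutative monoid on A(v, Λ).
   The rest is multiset arithmetic: left divisibility is inclusion, right-lcms
   are maxima, the atoms are the single letters, the lcm-closure of j(A)
   consists of the paths with pairwise distinct labels, and a normal form
   splits off one copy of each label at a time.  Sorting a word of length n by
   adjacent transpositions takes at most n^2 steps, which gives the quadratic
   isoperimetric inequality. *)

From HB Require Import structures.
From Stdlib Require Import Relations ClassicalEpsilon Wf_nat.
From Stdlib Require List.
From mathcomp Require Import all_boot zify.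

Set Implicit Arguments.
Unset Strict Implicit.
Unset Printing Implicit Defensive.

Section Multisets.
Variable T : eqType.

Definition msubset (M N : seq T) : Prop :=
  forall x, count_mem x M <= count_mem x N.

Lemma count_mem_gt0 (s : seq T) x : (0 < count_mem x s) = (x \in s).
Proof. by rewrite -has_pred1 has_count. Qed.

Lemma perm_count_mem (s t : seq T) x : perm_eq s t -> count_mem x s = count_mem x t.
Proof. by move/permP. Qed.

Lemma count_mem_perm (s t : seq T) :
  (forall x, count_mem x s = count_mem x t) -> perm_eq s t.
Proof. by move=> h; apply/allP => x _; apply/eqP; exact: h. Qed.

Lemma msubset_anti (M N : seq T) : msubset M N -> msubset N M -> perm_eq M N.
Proof. by move=> h1 h2; apply: count_mem_perm => x; apply/eqP; rewrite eqn_leq h1 h2. Qed.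

Lemma exists_count_subn (M N : seq T) :
  exists R, forall x, count_mem x R = count_mem x N - count_mem x M.
Proof.
elim: N => [|a N [R hR]]; first by exists [::].
case: (leqP (count_mem a M) (count_mem a N)) => h.
- exists (a :: R) => x /=; rewrite hR; case: eqP => [<-|_] /=; lia.
- exists R => x /=; rewrite hR; case: eqP => [<-|_] /=; lia.
Qed.

Lemma exists_count_maxn (M N : seq T) :
  exists U, forall x, count_mem x U = maxn (count_mem x M) (count_mem x N).
Proof.
have [R hR] := exists_count_subn M N.
by exists (M ++ R) => x; rewrite count_cat hR; lia.
Qed.

Lemma msubset_perm_cat (M N : seq T) : msubset M N -> exists R, perm_eq N (M ++ R).
Proof.
move=> hMN; have [R hR] := exists_count_subn M N; exists R.
by apply: count_mem_perm => x; rewrite count_cat hR; have := hMN x; lia.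
Qed.

End Multisets.

Section AdjacentSwaps.
Variable T : eqType.

Inductive swaps : nat -> seq T -> seq T -> Prop :=
| swaps0 l : swaps 0 l l
| swapsS n l1 u w l2 l' :
    swaps n (l1 ++ w :: u :: l2) l' -> swaps n.+1 (l1 ++ u :: w :: l2) l'.

Lemma swaps_trans n m l1 l2 l3 : swaps n l1 l2 -> swaps m l2 l3 -> swaps (n + m) l1 l3.
Proof. by elim=> {n l1 l2} // n l1 u w l2 l' _ IH /IH; apply: swapsS. Qed.

Lemma swaps_cons n l l' b : swaps n l l' -> swaps n (b :: l) (b :: l').
Proof.
elim=> {n l l'}; first by constructor.
by move=> n l1 u w l2 l' _ IH; apply: (@swapsS _ (b :: l1)).
Qed.

Lemma swaps_to_front l1 a l2 : swaps (size l1) (l1 ++ a :: l2) (a :: l1 ++ l2).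
Proof.
elim: l1 => [|b l1 IH] /=; first by constructor.
rewrite -addn1; apply: swaps_trans; first exact: swaps_cons IH.
by apply: (@swapsS _ [::]); constructor.
Qed.

(* Insertion sort: moving each letter to the front costs at most [size l] swaps. *)
Lemma perm_swaps l l' : perm_eq l l' -> exists2 k, k <= size l ^ 2 & swaps k l l'.
Proof.
elim: l' l => [|a l' IH] l.
  by move/perm_size; case: l => // _; exists 0 => //; constructor.
move=> hp; have ha : a \in l by rewrite (perm_mem hp) mem_head.
move: hp; case/splitPr: ha => l1 l2 hp.
have hp' : perm_eq (l1 ++ l2) l'.
  by rewrite -(perm_cons a); apply: perm_trans hp; rewrite -cat1s perm_catCA.
have [k hk hs] := IH _ hp'.
exists (size l1 + k); last exact: swaps_trans (swaps_to_front _ _ _) (swaps_cons _ hs).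
by move: hk; rewrite !size_cat /= -!mulnn; nia.
Qed.

End AdjacentSwaps.

Lemma clos_rst_sub (T : Type) (R S : relation T) :
  (forall x y, R x y -> clos_refl_sym_trans T S x y) ->
  forall x y, clos_refl_sym_trans T R x y -> clos_refl_sym_trans T S x y.
Proof.
move=> hRS x y; elim=> {x y} [x y|x|x y _ h|x y z _ h1 _ h2].
- exact: hRS.
- exact: rst_refl.
- exact: rst_sym h.
- exact: rst_trans h1 h2.
Qed.

Lemma sumn_eq1 (T : Type) (sz : T -> nat) (fs : seq T) : sumn (map sz fs) = 1 ->
  exists i f, [/\ List.nth_error fs i = Some f, sz f = 1 &
    forall j g, j <> i -> List.nth_error fs j = Some g -> sz g = 0].
Proof.
have sumn0 (gs : seq T) j g :
    sumn (map sz gs) = 0 -> List.nth_error gs j = Some g -> sz g = 0.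
  elim: gs j => [|a gs IH] [|j] //= h; [by case=> <-; lia | apply: IH; lia].
elim: fs => [|f fs IH] //= h; case e : (sz f) => [|k].
- rewrite e add0n in h; have [i [g [h1 h2 h3]]] := IH h.
  exists i.+1, g; split => // [[|j]] g' ne /=; first by case=> <-.
  by apply: h3 => ej; apply: ne; rewrite ej.
- have k0 : k = 0 by lia.
  subst k; exists 0, f; split => // [[|j]] g ne //= hj.
  by apply: (sumn0 fs) hj; lia.
Qed.

(* Arrows are compared classically, so that words of arrows can be handled as
   multisets. *)
Definition arr_eqb (X : qsys) (x y : arr X) : bool :=
  if excluded_middle_informative (x = y) then true else false.

Lemma arr_eqP (X : qsys) : Equality.axiom (@arr_eqb X).
Proof.
by move=> x y; rewrite /arr_eqb; case: excluded_middle_informative; constructor.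
Qed.

HB.instance Definition _ (X : qsys) := hasDecEq.Build (arr X) (@arr_eqP X).

(** * Labels of paths *)

Section StructureCategory.
Variable X : qsys.
Local Notation A := (arr X).
Local Notation qp := (qpath X).
Local Notation src := (@src X).
Local Notation tgt := (@tgt X).
Local Notation lft := (@lft X).
Local Notation rgt := (@rgt X).
Local Notation valid_from := (@valid_from X).
Local Notation pvalid := (@pvalid X).
Local Notation ldiv := (@ldiv X).
Local Notation end_from := (@end_from X).

Lemma valid_from_cat v a b :
  valid_from v (a ++ b) <-> valid_from v a /\ valid_from (end_from v a) b.
Proof. by elim: a v => [|x a IH] v /=; [tauto | rewrite IH; tauto]. Qed.

Lemma end_from_cat v a b : end_from v (a ++ b) = end_from (end_from v a) b.
Proof. by elim: a v => //= x a IH v. Qed.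

Lemma pvalid_pcat (f g : qp) : ptgt f = psrc g -> pvalid (pcat f g) -> pvalid f /\ pvalid g.
Proof. by rewrite /pvalid /ptgt /psrc /= => e /valid_from_cat; rewrite e. Qed.

Fixpoint act (xs : seq A) (z : A) : A :=
  if xs is x :: xs' then lft x (act xs' z) else z.

(* The i-th label of [x_1|...|x_n] is [act [:: x_1; ...; x_(i-1)] x_i]. *)
Fixpoint labels (xs : seq A) : seq A :=
  if xs is x :: xs' then x :: map (lft x) (labels xs') else [::].

Lemma act_cat a b z : act (a ++ b) z = act a (act b z).
Proof. by elim: a => //= x a ->. Qed.

Lemma size_labels xs : size (labels xs) = size xs.
Proof. by elim: xs => //= x xs IH; rewrite size_map IH. Qed.

Lemma labels_cat xs zs : labels (xs ++ zs) = labels xs ++ map (act xs) (labels zs).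
Proof.
elim: xs => /= [|x xs ->]; first by rewrite map_id.
by rewrite map_cat -map_comp.
Qed.

Hypothesis Hmor : sigma_quiver_morphism X.
Hypothesis Hbraid : braid_relation X.
Hypothesis Hinv : yb_involutive X.
Hypothesis Hnd : left_nondegenerate X.
Variable star : A -> A -> A.
Hypothesis Hstar : star_spec star.

Lemma lft_inj x y1 y2 :
  src y1 = tgt x -> src y2 = tgt x -> lft x y1 = lft x y2 -> y1 = y2.
Proof. exact: (Hnd x).1. Qed.

Lemma src_star x y : src x = src y -> src (star x y) = tgt x.
Proof. by case/Hstar. Qed.

Lemma lft_star x y : src x = src y -> lft x (star x y) = y.
Proof. by case/Hstar. Qed.

Lemma src_lft x y : tgt x = src y -> src (lft x y) = src x.
Proof. by case/Hmor. Qed.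

Lemma tgt_lft x y : tgt x = src y -> tgt (lft x y) = src (rgt x y).
Proof. by case/Hmor. Qed.

Lemma tgt_rgt x y : tgt x = src y -> tgt (rgt x y) = tgt y.
Proof. by case/Hmor. Qed.

Lemma star_lft x y : src y = tgt x -> star x (lft x y) = y.
Proof.
move=> h; have e : src x = src (lft x y) by rewrite src_lft.
by apply: (lft_inj (src_star e) h); apply: lft_star.
Qed.

Lemma lft_lft_rgt x y : tgt x = src y -> lft (lft x y) (rgt x y) = x.
Proof. by case/Hinv. Qed.

Lemma lft_braid x y z : tgt x = src y -> tgt y = src z ->
  lft x (lft y z) = lft (lft x y) (lft (rgt x y) z).
Proof. by move=> h1 h2; have /(congr1 (fun t => t.1.1)) := Hbraid h1 h2. Qed.

Lemma src_act v xs z : valid_from v xs -> src z = end_from v xs -> src (act xs z) = v.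
Proof. by elim: xs v => //= x xs IH v [hx hv] hz; rewrite src_lft // (IH _ hv hz). Qed.

Lemma src_labels v xs y : valid_from v xs -> y \in labels xs -> src y = v.
Proof.
elim: xs v y => //= x xs IH v y [hx hv].
by rewrite inE => /orP [/eqP -> //|/mapP [w hw ->]]; rewrite src_lft // (IH _ _ hv hw).
Qed.

Lemma act_inj v xs z1 z2 : valid_from v xs ->
  src z1 = end_from v xs -> src z2 = end_from v xs -> act xs z1 = act xs z2 -> z1 = z2.
Proof.
elim: xs v => //= x xs IH v [hx hv] h1 h2 e.
by apply: (IH _ hv h1 h2); apply: (lft_inj _ _ e); apply: src_act.
Qed.

Fixpoint unact (xs : seq A) (w : A) : A :=
  if xs is x :: xs' then unact xs' (star x w) else w.

Lemma src_unact v xs w : valid_from v xs -> src w = v -> src (unact xs w) = end_from v xs.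
Proof.
elim: xs v w => //= x xs IH v w [hx hv] hw.
by apply: IH => //; apply: src_star; congruence.
Qed.

Lemma unactK v xs w : valid_from v xs -> src w = v -> act xs (unact xs w) = w.
Proof.
elim: xs v w => //= x xs IH v w [hx hv] hw.
rewrite (IH (tgt x)) //; first by apply: lft_star; congruence.
by apply: src_star; congruence.
Qed.

Lemma actK v xs z : valid_from v xs -> src z = end_from v xs -> unact xs (act xs z) = z.
Proof.
move=> hv hz; apply: (act_inj hv) => //; last exact: unactK (src_act hv hz).
exact: src_unact (src_act hv hz).
Qed.

Lemma labels_inj v xs1 xs2 :
  valid_from v xs1 -> valid_from v xs2 -> labels xs1 = labels xs2 -> xs1 = xs2.
Proof.
elim: xs1 v xs2 => [|x1 xs1 IH] v [|x2 xs2] //= [h1 v1] [h2 v2] [ex e]; subst x2.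
congr cons; apply: (IH (tgt x1)) => //.
have E l : valid_from (tgt x1) l -> map (star x1) (map (lft x1) (labels l)) = labels l.
  move=> vl; rewrite -map_comp -[RHS]map_id; apply/eq_in_map => y hy /=.
  exact/star_lft/(src_labels vl hy).
by rewrite -(E _ v1) -(E _ v2) e.
Qed.

Lemma labels_surj v ys : (forall y, y \in ys -> src y = v) ->
  exists2 xs, valid_from v xs & labels xs = ys.
Proof.
elim/last_ind: ys => [|ys y IH] h; first by exists [::].
have [w hw|xs hv he] := IH; first by apply: h; rewrite mem_rcons inE hw orbT.
have hy : src y = v by apply: h; rewrite mem_rcons mem_head.
exists (xs ++ [:: unact xs y]).
  by apply/valid_from_cat; split => //=; split => //; apply: src_unact.
by rewrite labels_cat he /= (unactK hv hy) cats1.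
Qed.

(** * Equality in the structure category *)

Local Notation rstep := (@rstep X).
Local Notation ceq := (@ceq X).

Lemma rstep_labels_at a x y b v : valid_from v (a ++ x :: y :: b) ->
  [/\ valid_from v (a ++ lft x y :: rgt x y :: b),
      labels (a ++ x :: y :: b) =
        labels a ++ map (act a) (x :: lft x y :: map (lft x \o lft y) (labels b))
    & labels (a ++ lft x y :: rgt x y :: b) =
        labels a ++ map (act a) (lft x y :: x :: map (lft x \o lft y) (labels b))].
Proof.
move/valid_from_cat => [va /= [hx [hxy vb]]].
split.
- apply/valid_from_cat; split => //=; split; first by rewrite src_lft.
  by split; [rewrite tgt_lft | rewrite tgt_rgt].
- by rewrite !labels_cat /= map_comp.
- rewrite !labels_cat /= lft_lft_rgt //; congr (_ ++ map _ (_ :: _ :: _)).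
  rewrite -map_comp; apply/eq_in_map => z hz /=.
  by rewrite -lft_braid // (src_labels vb hz).
Qed.

Lemma rstep_labels p q : rstep p q ->
  [/\ pvalid p, pvalid q, p.1 = q.1 & perm_eq (labels p.2) (labels q.2)].
Proof.
case=> vp [a [b [x [y [hxy [ep ->]]]]]].
move: vp; rewrite /pvalid ep => vp.
have [vq -> ->] := rstep_labels_at vp; split => //=.
by rewrite perm_cat2l /= (perm_catCA [:: act a _] [:: act a _]).
Qed.

Lemma ceq_labels p q : ceq p q ->
  [/\ pvalid p, pvalid q, p.1 = q.1 & perm_eq (labels p.2) (labels q.2)].
Proof.
case=> vp h; suff [hv -> hp] : [/\ pvalid p <-> pvalid q, p.1 = q.1
    & perm_eq (labels p.2) (labels q.2)] by split => //; apply/hv.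
elim: h {vp} => {p q}.
- by move=> p q /rstep_labels [].
- by move=> p; split.
- by move=> p q _ [h1 h2 h3]; split => //; [tauto | rewrite perm_sym].
- move=> p q r _ [h1 h2 h3] _ [h1' h2' h3'].
  by split; [tauto | congruence | exact: perm_trans h3'].
Qed.

Lemma ceq_refl p : pvalid p -> ceq p p.
Proof. by split => //; apply: rst_refl. Qed.

Lemma ceq_sym p q : ceq p q -> ceq q p.
Proof. by move=> h; have [_ vq _ _] := ceq_labels h; split => //; apply/rst_sym/h.2. Qed.

Lemma ceq_trans p q r : ceq p q -> ceq q r -> ceq p r.
Proof. by move=> [vp h1] [_ h2]; split => //; exact: rst_trans h1 h2. Qed.

Lemma ceq_size p q : ceq p q -> size p.2 = size q.2.
Proof. by case/ceq_labels => _ _ _ /perm_size; rewrite !size_labels. Qed.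

Lemma step2_rstep p q : step2 star p q -> rstep p q.
Proof.
case=> vp [a [b [x [y [nxy [sxy [ep ->]]]]]]].
split => //; exists a, b, x, (star x y); split; first by rewrite src_star.
have hs : tgt x = src (star x y) by rewrite src_star.
have e : rgt x (star x y) = star y x.
  apply: (@lft_inj y); first by rewrite -(tgt_lft hs) lft_star.
    by rewrite src_star.
  by rewrite -{1}(lft_star sxy) lft_lft_rgt // lft_star.
by split => //; rewrite lft_star // e.
Qed.

(* A relation [x|y ~ (x⇀y)|(x↼y)] is trivial exactly when [x ⇀ y = x]. *)
Lemma rstep_step2 p q : rstep p q -> p = q \/ step2 star p q.
Proof.
case=> vp [a [b [x [y [hxy [ep eq]]]]]].
have sl : src (lft x y) = src x by rewrite src_lft.
case: (eqVneq (lft x y) x) => e.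
- have sr : src (rgt x y) = tgt x by rewrite -(tgt_lft hxy) e.
  have er : rgt x y = y.
    by apply: (@lft_inj x); rewrite // -?hxy // -{1}e lft_lft_rgt // e.
  by left; rewrite eq e er -ep; case: (p).
- right; split => //; exists a, b, x, (lft x y).
  split; first by apply/eqP; rewrite eq_sym.
  split => //; split; first by rewrite star_lft.
  rewrite eq; congr (_, _ ++ _ :: _ :: _).
  have h1 : src (star (lft x y) x) = tgt (lft x y) by rewrite src_star.
  apply: (@lft_inj (lft x y)) => //; first by rewrite tgt_lft.
  by rewrite lft_lft_rgt // lft_star.
Qed.

Lemma ceq_step2E p q :
  ceq p q <-> pvalid p /\ clos_refl_sym_trans qp (step2 star) p q.
Proof.
split; case=> vp h; split => //; move: h; apply: clos_rst_sub => p' q'.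
- by case/rstep_step2 => [->|h]; [apply: rst_refl | apply: rst_step].
- by move/step2_rstep; apply: rst_step.
Qed.

Definition step2_within k (p q : qp) : Prop :=
  exists2 k', k' <= k & nsteps (step2 star) k' p q.

Lemma step2_within_cons k p r q :
  rstep p r -> step2_within k r q -> step2_within k.+1 p q.
Proof.
move=> /rstep_step2 [->|h] [k' hk hn]; first by exists k' => //; apply: leqW.
by exists k'.+1 => //; apply: nstepsS hn; left.
Qed.

Lemma swaps_lift k l l' : swaps k l l' -> forall p, pvalid p -> labels p.2 = l ->
  exists q, [/\ pvalid q, q.1 = p.1, labels q.2 = l' & step2_within k p q].
Proof.
elim=> {k l l'}.
  by move=> l p vp e; exists p; split => //; exists 0 => //; constructor.
move=> n L1 u w L2 l' _ IH p vp e.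
set a := take (size L1) p.2; set r := drop (size L1) p.2.
have ep : p.2 = a ++ r by rewrite cat_take_drop.
have hs : size L1 <= size p.2 by rewrite -(size_labels p.2) e size_cat leq_addr.
have sa : size (labels a) = size L1 by rewrite size_labels size_take_min; apply/minn_idPl.
move: e; rewrite ep labels_cat => /eqP; rewrite eqseq_cat // => /andP [/eqP ea /eqP er].
move: er; case er': r => [|x [|y b]] //= [ex ey eL].
have vp' : valid_from p.1 (a ++ x :: y :: b) by rewrite -er' -ep.
have [vq _ e2] := rstep_labels_at vp'.
have hxy : tgt x = src y by move: vp' => /valid_from_cat [_ /= [_ []]].
set q := (p.1, a ++ lft x y :: rgt x y :: b).
have rq : rstep p q by split => //; exists a, b, x, y; rewrite ep er'.
have [|q' [vq' e1' e2' hn]] := IH q vq.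
  by rewrite /q /= e2 ea /= ex ey -eL map_comp.
by exists q'; split => //; apply: step2_within_cons hn.
Qed.

Lemma nsteps_step2_rst k p q :
  nsteps (step2 star) k p q -> clos_refl_sym_trans qp rstep p q.
Proof.
elim=> {k p q} [p|n p r q [h|h] _ IH]; first exact: rst_refl.
  by apply: rst_trans IH; apply/rst_step/step2_rstep.
by apply: rst_trans IH; apply/rst_sym/rst_step/step2_rstep.
Qed.

Lemma perm_labels_step2_within p q : pvalid p -> pvalid q -> p.1 = q.1 ->
  perm_eq (labels p.2) (labels q.2) -> step2_within (size p.2 ^ 2) p q.
Proof.
move=> vp vq e hp; have [k hk hs] := perm_swaps hp.
have [q' [vq' e1 e2 [k' hk' hn]]] := swaps_lift hs vp erefl.
have eq : q' = q.
  have e3 : q'.1 = q.1 by rewrite e1.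
  have e4 : q'.2 = q.2 by apply: (labels_inj (v := q.1)); rewrite // -e3.
  by move: e3 e4; case: (q') => ? ?; case: (q) => ? ? /= -> ->.
subst q'; exists k' => //; apply: leq_trans hk' (leq_trans hk _).
by rewrite size_labels.
Qed.

Lemma ceqE p q : ceq p q <->
  [/\ pvalid p, pvalid q, p.1 = q.1 & perm_eq (labels p.2) (labels q.2)].
Proof.
split; first exact: ceq_labels.
case=> vp vq e hp; have [k _ hn] := perm_labels_step2_within vp vq e hp.
by split => //; apply: nsteps_step2_rst hn.
Qed.

Lemma step2_isoperimetric : exists C : nat, forall p q : qp, ceq p q ->
  exists n, n <= C * (plen p + plen q) ^ 2 /\ nsteps (step2 star) n p q.
Proof.
exists 1 => p q /ceq_labels [vp vq e hp].
have [k hk hn] := perm_labels_step2_within vp vq e hp; exists k; split => //.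
by apply: leq_trans hk _; rewrite mul1n leq_exp2r // leq_addr.
Qed.

Local Notation invertible := (@invertible X).
Local Notation is_rlcm := (@is_rlcm X).
Local Notation is_atom := (@is_atom X).

Lemma jmap_inj s t : ceq (jmap s) (jmap t) -> s = t.
Proof. by case/ceq_labels => _ _ _ /perm_mem/(_ t); rewrite !mem_seq1 eqxx => /eqP. Qed.

(** * Divisibility, right-lcms and atoms *)

Lemma ldivE a b : ldiv a b <->
  [/\ pvalid a, pvalid b, a.1 = b.1 & msubset (labels a.2) (labels b.2)].
Proof.
split.
- case=> z [ez /ceqE [vab vb e hp]].
  have [va _] := pvalid_pcat ez vab; split => // x.
  by rewrite -(perm_count_mem x hp) labels_cat count_cat leq_addr.
- case=> va vb e /msubset_perm_cat [R hR].
  have srcR y : y \in R -> src y = a.1.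
    by move=> hy; rewrite e; apply: (src_labels vb); rewrite (perm_mem hR) mem_cat hy orbT.
  have [|zs vz ez] := @labels_surj (ptgt a) (map (unact a.2) R).
    by move=> _ /mapP [w hw ->]; apply: (src_unact va (srcR _ hw)).
  exists (ptgt a, zs); split => //; apply/ceqE; split => //=.
    by apply/valid_from_cat.
  have eR : map (act a.2 \o unact a.2) R = R.
    by rewrite -[RHS]map_id; apply/eq_in_map => w /srcR /(unactK va).
  by rewrite labels_cat ez -map_comp eR perm_sym.
Qed.

Lemma ldiv_ceq s d d' : ldiv s d -> ceq d d' -> ldiv s d'.
Proof. by case=> z [ez h] h'; exists z; split => //; apply: ceq_trans h'. Qed.

Lemma ldiv_anti a b : ldiv a b -> ldiv b a -> ceq a b.
Proof.
move=> /ldivE [va vb e s1] /ldivE [_ _ _ s2].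
by apply/ceqE; split => //; apply: msubset_anti.
Qed.

Lemma invertible_nil p : invertible p -> p.2 = [::].
Proof.
case=> _ [q [_ [_ [/ceq_size /= /eqP]]]].
by rewrite size_cat addn_eq0 size_eq0 => /andP [/eqP].
Qed.

Lemma nil_invertible p : pvalid p -> p.2 = [::] -> invertible p.
Proof.
case: p => v l /= vp e; subst l; split => //; exists (v, [::]).
by do 3!split => //; apply: ceq_refl.
Qed.

Lemma invertible_idp p : invertible p -> ceq p (idp (psrc p)).
Proof.
move=> h; have e := invertible_nil h; case: h => vp _.
by move: vp e; case: p => v l /= vp ->; apply: ceq_refl.
Qed.

Lemma ceq_left_cancellative : left_cancellative X.
Proof.
move=> a b c eb ec /ceqE [vab vac _]; rewrite !labels_cat perm_cat2l.
have [va vb] := pvalid_pcat eb vab; have [_ vc] := pvalid_pcat ec vac.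
have unactE (z : qp) : pvalid z -> ptgt a = psrc z ->
    map (unact a.2) (map (act a.2) (labels z.2)) = labels z.2.
  move=> vz ez; rewrite -map_comp -[RHS]map_id; apply/eq_in_map => w hw /=.
  by apply: (actK va); rewrite (src_labels vz hw).
move/(perm_map (unact a.2)); rewrite unactE // unactE // => hp.
by apply/ceqE; split => //; exact: etrans (esym eb) ec.
Qed.

Lemma rlcm_count_maxn a b : pvalid a -> pvalid b -> a.1 = b.1 ->
  exists c, [/\ pvalid c, c.1 = a.1,
    forall x, count_mem x (labels c.2) =
      maxn (count_mem x (labels a.2)) (count_mem x (labels b.2))
  & is_rlcm c a b].
Proof.
move=> va vb e; have [U hU] := exists_count_maxn (labels a.2) (labels b.2).
have [y|us vu eu] := @labels_surj a.1 U.
  rewrite -count_mem_gt0 hU leq_max !count_mem_gt0 => /orP [hy|hy].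
    exact: src_labels va hy.
  by rewrite e; exact: src_labels vb hy.
exists (a.1, us); split => //=; first by rewrite eu.
split.
- by apply/ldivE; split => // x /=; rewrite eu hU leq_maxl.
- by apply/ldivE; split => // x /=; rewrite eu hU leq_maxr.
- move=> d /ldivE [_ vd ed h1] /ldivE [_ _ _ h2].
  by apply/ldivE; split => // x /=; rewrite eu hU geq_max h1 h2.
Qed.

Lemma ceq_conditional_rlcms : conditional_rlcms X.
Proof.
move=> a b d /ldivE [va _ e1 _] /ldivE [vb _ e2 _].
by have [|c [_ _ _ h]] := rlcm_count_maxn va vb; [congruence | exists c].
Qed.

Lemma ceq_unique_rlcms : unique_rlcms X.
Proof.
move=> a b c c' [h1 h2 hc] [h1' h2' hc'].
by apply: ldiv_anti; [apply: hc | apply: hc'].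
Qed.

Lemma rlcm_jmap_star x y : x <> y -> src x = src y ->
  ceq (pcat (jmap x) (jmap (star x y))) (pcat (jmap y) (jmap (star y x))) /\
  is_rlcm (pcat (jmap x) (jmap (star x y))) (jmap x) (jmap y).
Proof.
move=> nxy sxy.
have vp : pvalid (pcat (jmap x) (jmap (star x y))) by rewrite /pvalid /= src_star.
have eY : labels (pcat (jmap x) (jmap (star x y))).2 = [:: x; y] by rewrite /= lft_star.
split.
  split => //; apply/rst_step/step2_rstep; split => //.
  by exists [::], [::], x, y; do 3!split => //; rewrite /pcat /= sxy.
split; try by apply/ldivE; split => // z; rewrite eY /=; case: eqP; case: eqP.
move=> d /ldivE [_ vd ed h1] /ldivE [_ _ _ h2].
apply/ldivE; split => // z; rewrite eY; move: (h1 z) (h2 z) => /=.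
by case: eqP => [<-|_]; case: eqP => [e|_] //=; by [rewrite e in nxy | rewrite addn0].
Qed.

Lemma ceq_noetherian : noetherian X.
Proof.
apply: (well_founded_lt_compat _ (fun p : qp => size p.2)).
move=> x y [vx [y' [y'' [vy' [vy'' [_ [_ [hc hn]]]]]]]]; apply/ltP.
rewrite -(ceq_size hc) /= !size_cat.
have nonnil (z : qp) : pvalid z -> ~ invertible z -> 0 < size z.2.
  by move=> vz hz; case e : z.2 => //; case: hz; apply: nil_invertible.
by case: hn => [/(nonnil _ vy') | /(nonnil _ vy'')]; lia.
Qed.

Lemma ceq_jmap p s : ceq p (jmap s) -> p = jmap s.
Proof.
case/ceq_labels => vp _ e hp.
move: (perm_size hp) (perm_mem hp) vp e; rewrite size_labels; clear hp.
case: p => v [|x [|y r]] //= _ hm vp e.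
by move: (hm x); rewrite !mem_seq1 eqxx => /esym/eqP ->; rewrite e.
Qed.

Lemma is_atom_jmap s : is_atom (jmap s).
Proof.
split => // fs [hv [hc [f [fs' [efs hpr]]]]].
move: (ceq_size hpr); rewrite /= size_flatten /shape -map_comp => /sumn_eq1.
move=> [i [g [hg hg1 hothers]]]; exists i; split.
- by exists g; split => // /invertible_nil hg0; rewrite /= hg0 in hg1.
- move=> j g' ne hj; apply: nil_invertible.
    by move/List.Forall_forall: hv; apply; apply: List.nth_error_In hj.
  by apply/eqP; rewrite -size_eq0; apply/eqP; apply: (hothers j).
Qed.

Lemma atom_ceq_jmap p : is_atom p -> exists s, ceq p (jmap s).
Proof.
case: p => v l [vp hat].
have single : factorization (v, l) [:: (v, l)].
  split; first by constructor.
  by split => //; exists (v, l), [::]; rewrite /= cats0; split => //; apply: ceq_refl.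
have [i [[f [hfi hf]] _]] := hat _ single.
have {hf} : ~ invertible (v, l) by case: (List.nth_error_In _ _ hfi) hf => [<-|[]].
case: l vp hat {single hfi} => [|x [|y r]] vp hat hf.
- by case: hf; apply: nil_invertible.
- by exists x; case: vp => /= <- _; apply: ceq_refl.
- have [sx [sy vr]] := vp.
  have pair : factorization (v, [:: x, y & r]) [:: (v, [:: x]); (tgt x, y :: r)].
    split; first by constructor; [split | constructor; [split | constructor]].
    split => //; exists (v, [:: x]), [:: (tgt x, y :: r)]; split => //=.
    by rewrite cats0; apply: ceq_refl.
  have [j [_ hall]] := hat _ pair; case: (eqVneq j 0) hall => [->|nj0] hall.
  + by have /invertible_nil // : invertible (tgt x, y :: r) by apply: (hall 1).
  + have /invertible_nil // : invertible (v, [:: x]).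
    by apply: (hall 0) => //; apply/eqP; rewrite eq_sym.
Qed.

Lemma atomE p : is_atom p <-> exists s, ceq p (jmap s).
Proof. by split=> [|[s /ceq_jmap ->]]; [apply: atom_ceq_jmap | apply: is_atom_jmap]. Qed.

(** * The Garside family *)

Local Notation Ecl := (@Ecl X).

Lemma Ecl_uniq_labels p : Ecl p -> pvalid p /\ uniq (labels p.2).
Proof.
elim=> {p} [s p|v p|a b c _ [va ua] _ [vb ub] [hac hbc hmin]].
- by case/ceq_labels => vp _ _ /perm_uniq ->.
- by case/ceq_labels => vp _ _ /perm_uniq ->.
have /ldivE [_ vc e1 _] := hac; have /ldivE [_ _ e2 _] := hbc.
have [|u [vu eu hu [hau hbu _]]] := rlcm_count_maxn va vb; first congruence.
have /ldivE [_ _ _ hs] := hmin _ hau hbu.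
split => //; apply: count_mem_uniq => x; apply/eqP; rewrite -count_mem_gt0 eqn_leq.
have : count_mem x (labels c.2) <= 1.
  by apply: leq_trans (hs x) _; rewrite hu geq_max !count_uniq_mem // !leq_b1.
by case: (count_mem x _) => [|[|]].
Qed.

Lemma uniq_labels_Ecl p : pvalid p -> uniq (labels p.2) -> Ecl p.
Proof.
move e : (labels p.2) => L; elim: L p e => [|y L IH] p e vp u.
  have e2 : p.2 = [::] by apply/eqP; rewrite -size_eq0 -size_labels e.
  by apply: (@Ecl_id _ p.1); move: vp e2; case: p {e} => v l /= vp ->; apply: ceq_refl.
have sy : src y = p.1 by apply: (src_labels vp); rewrite e mem_head.
have [w hw|l vl el] := @labels_surj p.1 L; first by apply: (src_labels vp); rewrite e inE hw orbT.
case/andP: u => ny uL.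
have Ea : Ecl (p.1, l) by apply: IH.
have Eb : Ecl (jmap y) by apply: (@Ecl_gen _ y); apply: ceq_refl.
apply: (Ecl_lcm Ea Eb); split.
- by apply/ldivE; split => // x /=; rewrite e el /= leq_addl.
- by apply/ldivE; split => //= x; rewrite e /=; case: eqP => //= _; apply: leq_addr.
- move=> d /ldivE [_ vd ed h1] /ldivE [_ _ _ h2].
  apply/ldivE; split => // x; rewrite e /=; move: (h1 x) (h2 x); rewrite /= el.
  case: eqP => [<-|_] //= _; rewrite addn0.
  by have -> : count_mem y L = 0 by apply/count_memPn.
Qed.

Lemma Ssharp_Ecl f : Ecl f -> Ssharp Ecl f.
Proof.
move=> hf; right; exists f, (ptgt f, [::]); split => //; split; first exact: nil_invertible.
split => //; case/Ecl_uniq_labels: hf; case: f => v l /= vf _.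
by rewrite /pcat /= cats0; apply: ceq_refl.
Qed.

Lemma greedy_Ecl f g : pvalid f -> ptgt f = psrc g ->
  {subset map (act f.2) (labels g.2) <= labels f.2} -> greedy Ecl f g.
Proof.
move=> vf efg hin s c /Ecl_uniq_labels [vs us] vc ec /ldivE [_ vcfg es hs].
have vcf : pvalid (pcat c f) by move: vcfg; rewrite /pvalid /= => /valid_from_cat [].
apply/ldivE; split => // x; have := hs x; rewrite /= labels_cat count_cat.
case: (boolP (x \in map (act (c.2 ++ f.2)) (labels g.2))) => hx; last first.
  by rewrite (count_memPn hx) addn0.
move=> _; rewrite (count_uniq_mem _ us); apply: leq_trans (leq_b1 _) _.
rewrite count_mem_gt0 labels_cat mem_cat; case/mapP: hx => w hw ->.
by rewrite act_cat map_f ?orbT // hin // map_f.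
Qed.

Lemma ceq_pcat2l f z z' : pvalid f -> ptgt f = psrc z -> ceq z z' ->
  ceq (pcat f z) (pcat f z').
Proof.
move=> vf e /ceqE [vz vz' ez hp]; rewrite /ptgt /psrc in e.
apply/ceqE; split => //=.
- by apply/valid_from_cat; rewrite e.
- by apply/valid_from_cat; rewrite e ez.
- by rewrite !labels_cat perm_cat2l perm_map.
Qed.

Lemma normal_form_nil p : pvalid p -> p.2 = [::] ->
  exists fs, fs <> [::] /\ s_normal Ecl fs /\ product_is fs p.
Proof.
move=> vp e; exists [:: p]; split => //; split.
  split; first by constructor.
  do 2!split => //.
  by constructor; [left; apply: nil_invertible | constructor].
by exists p, [::]; split => //=; rewrite cats0; case: (p) vp => v l vp; apply: ceq_refl.
Qed.

Lemma split_distinct_labels p : pvalid p -> p.2 != [::] -> exists f g,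
  [/\ ptgt f = psrc g, ceq (pcat f g) p, uniq (labels f.2), size g.2 < size p.2
    & {subset map (act f.2) (labels g.2) <= labels f.2}].
Proof.
move=> vp p_ne; set M := labels p.2.
have srcM y : y \in M -> src y = p.1 by apply: src_labels.
have [R hR] : exists R, perm_eq M (undup M ++ R).
  apply: msubset_perm_cat => x.
  by rewrite count_uniq_mem ?undup_uniq // mem_undup -count_mem_gt0; case: (count_mem x M).
have srcR y : y \in R -> src y = p.1.
  by move=> hy; apply: srcM; rewrite (perm_mem hR) mem_cat hy orbT.
have [y|fl vf ef] := @labels_surj p.1 (undup M); first by rewrite mem_undup; apply: srcM.
have [_ /mapP [w hw ->]|gl vg eg] := @labels_surj (end_from p.1 fl) (map (unact fl) R).
  exact: src_unact vf (srcR _ hw).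
have eR : map (act fl) (map (unact fl) R) = R.
  by rewrite -map_comp -[RHS]map_id; apply/eq_in_map => w /srcR /(unactK vf).
exists (p.1, fl), (end_from p.1 fl, gl); split => //=.
- apply/ceqE; split => //=; first by apply/valid_from_cat.
  by rewrite labels_cat ef eg eR perm_sym.
- by rewrite ef undup_uniq.
- rewrite -(size_labels gl) eg size_map -(size_labels p.2) -/M (perm_size hR).
  rewrite size_cat -add1n leq_add2r lt0n size_eq0; apply/eqP => /undup_nil /eqP.
  by rewrite -size_eq0 size_labels size_eq0 (negPf p_ne).
- by rewrite eg eR ef => w; rewrite mem_undup (perm_mem hR) mem_cat => ->; rewrite orbT.
Qed.

Lemma garside_Ecl : garside Ecl.
Proof.
move=> p; move: {2}(size p.2) (leqnn (size p.2)) => n.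
elim: n p => [|n IH] p hs vp.
  by apply: normal_form_nil => //; apply/eqP; rewrite -size_eq0 -leqn0.
case: (eqVneq p.2 [::]) => [|p_ne]; first exact: normal_form_nil.
have [f [g [efg hfg uf szg hin]]] := split_distinct_labels vp p_ne.
have [vf vg] := pvalid_pcat efg hfg.1.
have [|gs [_ [[hv [hc [hS hadj]]] [g1 [gs' [egs hpr]]]]]] := IH g _ vg.
  by rewrite -ltnS; apply: leq_trans hs.
subst gs; have [vg1 _ eg1 hpg] := ceq_labels hpr.
have ef1 : ptgt f = psrc g1 := etrans efg (esym eg1).
exists [:: f, g1 & gs']; split => //; split.
  split; first by constructor.
  split; first by split.
  split; first by constructor => //; apply/Ssharp_Ecl/uniq_labels_Ecl.
  split => //; apply: greedy_Ecl => //.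
  move=> _ /mapP [w hw ->]; apply: hin; rewrite map_f // -(perm_mem hpg) /=.
  by rewrite labels_cat mem_cat hw.
exists f, [:: g1 & gs']; split => //.
exact: ceq_trans (ceq_pcat2l vf _ hpr) hfg.
Qed.

Lemma greedy_ldiv_head (S : qfamily X) s fs f c : S s ->
  adj_all (greedy S) (f :: fs) -> chained (f :: fs) -> List.Forall pvalid (f :: fs) ->
  pvalid c -> ptgt c = psrc f ->
  ldiv s (c.1, c.2 ++ flatten (map snd (f :: fs))) -> ldiv s (pcat c f).
Proof.
move=> Ss; elim: fs f c => [|g fs IH] f c /=; first by rewrite cats0.
move=> [gr ad] [ch chs] /List.Forall_cons_iff [vf hv] vc ec hd.
have vcf : pvalid (pcat c f).
  by rewrite /pvalid /=; apply/valid_from_cat; rewrite /ptgt /psrc in ec; rewrite ec.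
apply: (gr s c Ss vc ec); apply: (IH g (pcat c f)) => //; last by rewrite /= -catA.
by rewrite /ptgt /= end_from_cat; rewrite /ptgt /psrc in ec ch; rewrite ec.
Qed.

Lemma garside_head (S : qfamily X) : garside S -> forall c, pvalid c -> exists f,
  [/\ ldiv f c, Ssharp S f & forall s, S s -> ldiv s c -> ldiv s f].
Proof.
move=> hG c vc; have [gs [_ [[hv [hc [hS hadj]]] [f [fs [egs hpr]]]]]] := hG c vc.
subst gs.
exists f; split; first by exists (ptgt f, flatten (map snd fs)).
  exact: List.Forall_inv hS.
move=> s Ss hs; have := greedy_ldiv_head Ss hadj hc hv (c := idp f.1) I erefl.
rewrite /pcat /= -surjective_pairing; apply.
by apply: ldiv_ceq hs _; apply: ceq_sym.
Qed.

(* Since [C(σ)] has no nontrivial invertible elements, [S^♯ = S]. *)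
Lemma Ssharp_mem (S : qfamily X) f : family_of_elements S ->
  (forall v, S (idp v)) -> Ssharp S f -> S f.
Proof.
move=> hF hid [hi|[s [e [Ss [/invertible_nil ee [_ hse]]]]]].
  by apply: hF (hid (psrc f)); apply/ceq_sym/invertible_idp.
by apply: hF Ss; move: hse; rewrite /pcat ee cats0 -surjective_pairing.
Qed.

Lemma Ecl_min (S : qfamily X) : family_of_elements S -> garside S ->
  (forall s, S (jmap s)) -> (forall v, S (idp v)) -> forall p, Ecl p -> S p.
Proof.
move=> hF hG hj hid p; elim=> {p} [s p|v p|a b c _ Sa _ Sb [hac hbc hmin]].
- by move/ceq_sym/hF; apply; apply: hj.
- by move/ceq_sym/hF; apply; apply: hid.
have /ldivE [_ vc _ _] := hac.
have [f [hfc hSf hhead]] := garside_head hG vc.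
apply: hF (Ssharp_mem hF hid hSf); apply: ldiv_anti hfc _.
by apply: hmin; apply: hhead.
Qed.

End StructureCategory.

Theorem theorem5p7 (X : qsys) (star : arr X -> arr X -> arr X) :
  inhabited (vert X) ->
  yang_baxter_map X -> yb_involutive X -> left_nondegenerate X ->
  star_spec star ->
  (* j is injective *)
  (forall s t : arr X, ceq (jmap s) (jmap t) -> s = t) /\
  (* (i) presentation and quadratic isoperimetric inequality *)
  ((forall p q : qpath X, ceq p q <->
       pvalid p /\ clos_refl_sym_trans (qpath X) (step2 star) p q) /\
   exists C : nat, forall p q : qpath X, ceq p q ->
     exists n, n <= C * (plen p + plen q) ^ 2 /\ nsteps (step2 star) n p q) /\
  (* (ii) no nontrivial invertible elements *)
  (forall p : qpath X, invertible p -> ceq p (idp (psrc p))) /\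
  (* (iii) left-cancellative *)
  left_cancellative X /\
  (* (iv) unique conditional right-lcms, complement given by star *)
  (conditional_rlcms X /\ unique_rlcms X /\
   forall x y : arr X, x <> y -> src x = src y ->
     ceq (pcat (jmap x) (jmap (star x y))) (pcat (jmap y) (jmap (star y x))) /\
     is_rlcm (pcat (jmap x) (jmap (star x y))) (jmap x) (jmap y)) /\
  (* (v) Noetherian *)
  noetherian X /\
  (* (vi) atoms are exactly j(A) *)
  (forall p : qpath X, is_atom p <-> exists s, ceq p (jmap s)) /\
  (* (vii) E is a Garside qfamily, and the smallest one containing j(A) and
     the identities *)
  (garside (@Ecl X) /\
   (forall s : arr X, Ecl (jmap s)) /\ (forall v : vert X, Ecl (idp v)) /\
   forall S : qfamily X, family_of_elements S -> garside S ->
     (forall s : arr X, S (jmap s)) -> (forall v : vert X, S (idp v)) ->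
     forall p : qpath X, Ecl p -> S p).
Proof.
move=> _ [Hmor Hbraid] Hinv Hnd Hstar.
split; first by apply: jmap_inj.
split; first by split; [apply: ceq_step2E | apply: step2_isoperimetric].
split; first by apply: invertible_idp.
split; first exact: (ceq_left_cancellative Hmor Hbraid Hinv Hnd Hstar).
split.
  split; first exact: (ceq_conditional_rlcms Hmor Hbraid Hinv Hnd Hstar).
  by split; [exact: (ceq_unique_rlcms Hmor Hbraid Hinv Hnd Hstar) | apply: rlcm_jmap_star].
split; first by apply: ceq_noetherian.
split; first by apply: atomE.
split; first exact: (garside_Ecl Hmor Hbraid Hinv Hnd Hstar).
split; first by move=> s; apply/Ecl_gen/ceq_refl.
split; first by move=> v; apply/Ecl_id/ceq_refl.
exact: (Ecl_min Hmor Hbraid Hinv Hnd Hstar).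
Qed.
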